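(* Let $M$ be a connected matroid whose ground set is $D_1\cup D_2\cup\{e\}$, where $e\notin D_1\cup D_2$ and $D_1,D_2$ are skew circuits of $M$. Then either $M$ has a $2$-element cocircuit avoiding $e$, or $M\cong S((U_{k-2,k};e),(U_{l-2,l};e))$ for some integers $k\ge3$ and $l\ge 3$.
   Context: Two sets $X,Y$ in a matroid with rank function $r$ are skew if $r(X)+r(Y)=r(X\cup Y)$. $U_{r,n}$ is the uniform matroid of rank $r$ on $n$ elements. Series connection: if $M_1,M_2$ are matroids with $E(M_1)\cap E(M_2)=\{p\}$ and $p$ is neither a loop nor a coloop of either, then $S((M_1;p),(M_2;p))$ is the matroid on $E(M_1)\cup E(M_2)$ whose circuits are the circuits of $M_1$ avoiding $p$, the circuits of $M_2$ avoiding $p$, and all sets $C_1\cup C_2$ where $C_i$ is a circuit of $M_i$ containing $p$ for $i=1,2$. *)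

(* Matroids on a finite type T (ground set = [set: T]),
   given by a rank function. *)
From mathcomp Require Import all_boot.
Set Implicit Arguments. Unset Strict Implicit. Unset Printing Implicit Defensive.

Record matroid (T : finType) := Matroid {
  rk : {set T} -> nat;
  rk_le_card : forall X, rk X <= #|X|;
  rk_mono : forall X Y : {set T}, X \subset Y -> rk X <= rk Y;
  rk_submod : forall X Y : {set T}, rk (X :|: Y) + rk (X :&: Y) <= rk X + rk Y
}.

Section Generic.
Variable T : finType.
Variable r : {set T} -> nat.

Definition indep (X : {set T}) : bool := r X == #|X|.
Definition circuit (C : {set T}) : bool :=
  ~~ indep C && [forall D : {set T}, (D \proper C) ==> indep D].

Definition dual_rk (X : {set T}) : nat := #|X| + r (~: X) - r [set: T].
End Generic.

Definition is_circuit T (M : matroid T) (C : {set T}) := circuit (rk M) C.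
Definition is_cocircuit T (M : matroid T) (C : {set T}) := circuit (dual_rk (rk M)) C.

Definition skew T (M : matroid T) (X Y : {set T}) : Prop :=
  rk M X + rk M Y = rk M (X :|: Y).

Definition connected T (M : matroid T) : Prop :=
  forall x y : T, x != y -> exists C, [/\ is_circuit M C, x \in C & y \in C].

Definition urk (n : nat) (T : finType) (X : {set T}) : nat := minn n #|X|.

(* Series connection of N1 on option A and N2 on option B, both with
   basepoint p = None; ground set option (A + B), with p = None. Given by
   its circuits, as in the definition. *)
Definition embl (A B : Type) (x : option A) : option (A + B) := omap inl x.
Definition embr (A B : Type) (x : option B) : option (A + B) := omap inr x.

Definition series_circuit (A B : finType)
    (c1 : {set option A} -> bool) (c2 : {set option B} -> bool)
    (C : {set option (A + B)}) : Prop :=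
  (exists C1, [/\ c1 C1, None \notin C1 & C = [set embl B x | x in C1]]) \/
  (exists C2, [/\ c2 C2, None \notin C2 & C = [set embr A x | x in C2]]) \/
  (exists C1 C2, [/\ c1 C1, c2 C2, None \in C1, None \in C2 &
        C = [set embl B x | x in C1] :|: [set embr A x | x in C2]]).

(* M is isomorphic to S((U_{k-2,k};p),(U_{l-2,l};p)): a bijection of ground
   sets carrying circuits exactly onto circuits.  U_{k-2,k} lives on
   option 'I_(k-1) (k elements, basepoint None). *)
Definition iso_series_uniform T (M : matroid T) (k l : nat) : Prop :=
  exists f : T -> option ('I_(k.-1) + 'I_(l.-1)),
    bijective f /\
    forall C : {set T},
      is_circuit M C <->
      series_circuit (circuit (@urk (k - 2) (option 'I_(k.-1))))
                     (circuit (@urk (l - 2) (option 'I_(l.-1))))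
                     [set f x | x in C].

From mathcomp Require Import all_boot zify.
Set Implicit Arguments. Unset Strict Implicit. Unset Printing Implicit Defensive.

(* Skewness makes D1 and D2 independent of each other: a proper subset of D1
   together with a proper subset of D2 is independent, so r(E) = |D1| + |D2| - 2
   and the only circuits avoiding e are D1 and D2.  If removing some pair {x, z}
   of one D_i lowers the rank, then {x, z} is a cocircuit, since no element of a
   circuit is a coloop.  Otherwise e is never spanned by (D1 - {x, z}) u D2,
   which forces every circuit through e to miss exactly one element of each D_i;
   conversely each such set E - {x, y} is a circuit.  These are exactly the
   circuits of the series connection of U_{|D1|-1,|D1|+1} and U_{|D2|-1,|D2|+1}
   at e. *)

Lemma properD2 (T : finType) (A : {set T}) x z : x \in A -> A :\: [set x; z] \proper A.
Proof. by move=> Ax; apply/properP; split; [exact: subsetDl | exists x; rewrite ?inE ?eqxx]. Qed.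

Definition rank_drop_pair (T : finType) (M : matroid T) (D : {set T}) : bool :=
  [exists x in D, exists z in D, (x != z) && (rk M (~: [set x; z]) < rk M setT)].

Section Rank.
Variables (T : finType) (M : matroid T).
Local Notation r := (rk M).

Lemma rkU_le (X Y : {set T}) : r (X :|: Y) <= r X + r Y.
Proof. by have := rk_submod M X Y; lia. Qed.

Lemma rk_setU1_le x (X : {set T}) : r (x |: X) <= (r X).+1.
Proof. by have := rkU_le [set x] X; have := rk_le_card M [set x]; rewrite cards1; lia. Qed.

Lemma indepS (X Y : {set T}) : X \subset Y -> indep r Y -> indep r X.
Proof.
move=> sXY /eqP rY; apply/eqP.
have := rkU_le X (Y :\: X); rewrite -{1}(setIidPr sXY) setID.
have := rk_le_card M (Y :\: X); rewrite cardsDS //.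
by have := rk_le_card M X; have := subset_leq_card sXY; lia.
Qed.

Lemma rk_circuit_lt (C : {set T}) : is_circuit M C -> r C < #|C|.
Proof. by case/andP=> /eqP rC _; have := rk_le_card M C; lia. Qed.

Lemma circuit_proper_indep (C D : {set T}) : is_circuit M C -> D \proper C -> indep r D.
Proof. by case/andP=> _ /forallP minC ltDC; apply: (implyP (minC D)). Qed.

Lemma circuit_subset_eq (X C : {set T}) : is_circuit M X -> is_circuit M C -> X \subset C -> X = C.
Proof.
move=> cX cC; rewrite subEproper => /orP[/eqP // | ltXC].
by have /eqP := circuit_proper_indep cC ltXC; have := rk_circuit_lt cX; lia.
Qed.

Lemma rk_circuit (C : {set T}) z : is_circuit M C -> z \in C ->
  r (C :\ z) = #|C| - 1 /\ r C = #|C| - 1.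
Proof.
move=> cC Cz; have /eqP := circuit_proper_indep cC (properD1 Cz).
have := rk_circuit_lt cC; have := rk_mono M (subD1set C z).
by rewrite (cardsD1 z C) Cz; lia.
Qed.

Lemma circuit_rk (C : {set T}) : is_circuit M C -> r C = #|C| - 1.
Proof.
move=> cC; have /card_gt0P[z Cz] : 0 < #|C| by have := rk_circuit_lt cC; lia.
by have [] := rk_circuit cC Cz.
Qed.

Lemma circuit_spans (C : {set T}) x (W : {set T}) : is_circuit M C -> x \in C -> C :\ x \subset W ->
  r (x |: W) = r W.
Proof.
move=> cC Cx sCW; have [rCx rC] := rk_circuit cC Cx.
have := rk_submod M C W.
have := rk_mono M (_ : C :\ x \subset C :&: W); rewrite subsetI subD1set => /(_ sCW).
have := rk_mono M (_ : x |: W \subset C :|: W); rewrite setSU ?sub1set // => /(_ isT).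
by have := rk_mono M (subsetUr [set x] W); lia.
Qed.

Lemma spansS x (W W' : {set T}) : W \subset W' -> r (x |: W) = r W -> r (x |: W') = r W'.
Proof.
move=> sWW' rxW; have := rk_submod M (x |: W) W'.
rewrite -setUA (setUidPr sWW').
have := rk_mono M (_ : W \subset (x |: W) :&: W'); rewrite subsetI subsetUr sWW' => /(_ isT).
by have := rk_mono M (subsetUr [set x] W'); lia.
Qed.

Lemma circuit_not_coloop (C : {set T}) z : is_circuit M C -> z \in C -> r [set~ z] = r setT.
Proof.
move=> cC Cz; rewrite -(circuit_spans cC Cz) ?setUCr //.
by apply/subsetP=> t; rewrite !inE => /andP[].
Qed.

Lemma cocircuit_pair x z : x != z -> r [set~ x] = r setT -> r [set~ z] = r setT ->
  r (~: [set x; z]) < r setT -> is_cocircuit M [set x; z].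
Proof.
move=> xz rx rz rxz; apply/andP; split.
  by rewrite /indep /dual_rk cards2 xz; apply/eqP; lia.
apply/forallP => D; apply/implyP => /properP[sD [t Dt tD]].
suff [w [rw sDw]] : exists w, r [set~ w] = r setT /\ D \subset [set w].
  apply/eqP; rewrite /dual_rk.
  have := rk_mono M (_ : [set~ w] \subset ~: D); rewrite setCS => /(_ sDw).
  by have := rk_mono M (subsetT (~: D)); have := subset_leq_card sDw; rewrite cards1; lia.
have sDt : D \subset [set x; z] :\ t by rewrite subsetD1 sD tD.
move: Dt sDt; rewrite !inE => /orP[]/eqP-> sDt; [exists z | exists x]; split=> //;
  apply: (subset_trans sDt); apply/subsetP=> u; rewrite !inE => /andP[/negbTE->];
  by rewrite ?orbF.
Qed.

Lemma rank_drop_pair_cocircuit (D : {set T}) : is_circuit M D -> rank_drop_pair M D ->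
  exists C, [/\ is_cocircuit M C, #|C| = 2 & C \subset D].
Proof.
move=> cD /existsP[x /andP[Dx /existsP[z /andP[Dz /andP[xz rxz]]]]].
exists [set x; z]; split; last by rewrite subUset !sub1set Dx Dz.
  by apply: cocircuit_pair; rewrite ?(circuit_not_coloop cD).
by rewrite cards2 xz.
Qed.

Lemma rank_drop_pairPn (D : {set T}) x z : ~~ rank_drop_pair M D ->
  x \in D -> z \in D -> x != z -> r (~: [set x; z]) = r setT.
Proof.
move=> noD Dx Dz xz; apply/eqP; rewrite eqn_leq rk_mono ?subsetT //= leqNgt.
by apply: contra noD => rxz; apply/existsP; exists x; rewrite Dx; apply/existsP; exists z; rewrite Dz xz.
Qed.

Lemma connected_rk1 x y : connected M -> x != y -> r [set x] = 1.
Proof.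
move=> conM xy; have [C [cC Cx Cy]] := conM x y xy.
have ltxC : [set x] \proper C.
  by rewrite properE sub1set Cx; apply/subsetPn; exists y; rewrite // inE eq_sym.
by have /eqP := circuit_proper_indep cC ltxC; rewrite cards1.
Qed.

Lemma circuit_card_ge2 (C : {set T}) :
  is_circuit M C -> {in C, forall x, r [set x] = 1} -> 2 <= #|C|.
Proof.
move=> cC rk1; have /card_gt0P[z Cz] : 0 < #|C| by have := rk_circuit_lt cC; lia.
have rC := circuit_rk cC.
by have := rk_mono M (_ : [set z] \subset C); rewrite sub1set rk1 // => /(_ Cz); lia.
Qed.

Lemma skew_rkI (X Y : {set T}) : skew M X Y -> r (X :&: Y) = 0.
Proof. by rewrite /skew; have := rk_submod M X Y; lia. Qed.

Lemma skew_disjoint (X Y : {set T}) :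
  {in X, forall x, r [set x] = 1} -> skew M X Y -> [disjoint X & Y].
Proof.
move=> rk1 /skew_rkI rXY; rewrite -setI_eq0; apply/set0Pn => -[t XYt].
have := rk_mono M (_ : [set t] \subset X :&: Y); rewrite sub1set rXY => /(_ XYt).
by move: XYt; rewrite inE => /andP[/rk1->].
Qed.

Lemma skew_subset (X Y A B : {set T}) : [disjoint X & Y] -> skew M X Y ->
  A \subset X -> B \subset Y -> r (A :|: B) = r A + r B.
Proof.
move=> dXY skXY sAX sBY.
have := rk_submod M (A :|: Y) X.
rewrite setUAC (setUidPr sAX) setIUl (setIidPl sAX) setIC (disjoint_setI0 dXY) setU0.
have := rk_submod M (A :|: B) Y.
rewrite -setUA (setUidPr sBY) setIUl (setIidPl sBY).
rewrite (disjoint_setI0 (disjointWl sAX dXY)) set0U.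
by have := rkU_le A B; move: skXY; rewrite /skew; lia.
Qed.

Lemma skew_indepU (X Y A B : {set T}) : [disjoint X & Y] -> skew M X Y ->
  A \subset X -> B \subset Y -> indep r A -> indep r B -> indep r (A :|: B).
Proof.
move=> dXY skXY sAX sBY /eqP rA /eqP rB; apply/eqP.
rewrite (skew_subset dXY skXY sAX sBY) cardsU rA rB.
by rewrite (disjoint_setI0 (disjointWr sBY (disjointWl sAX dXY))) cards0 subn0.
Qed.
End Rank.

Record skew_frame (T : finType) (M : matroid T) (D1 D2 : {set T}) (e : T) : Prop :=
  SkewFrame {
    frame_cover : [set~ e] = D1 :|: D2;
    frame_disjoint : [disjoint D1 & D2];
    frame_circuit1 : is_circuit M D1;
    frame_circuit2 : is_circuit M D2;
    frame_skew : skew M D1 D2;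
    frame_card1 : 2 <= #|D1|;
    frame_card2 : 2 <= #|D2|;
    frame_not_coloop : rk M [set~ e] = rk M setT;
    frame_no_drop1 : ~~ rank_drop_pair M D1;
    frame_no_drop2 : ~~ rank_drop_pair M D2
  }.

Lemma skew_frame_sym (T : finType) (M : matroid T) D1 D2 e :
  skew_frame M D1 D2 e -> skew_frame M D2 D1 e.
Proof.
case=> cov dis c1 c2 sk n1 n2 nc d1 d2; split=> //.
- by rewrite setUC.
- by rewrite disjoint_sym.
- by rewrite /skew setUC addnC.
Qed.

Section Frame.
Variables (T : finType) (M : matroid T) (D1 D2 : {set T}) (e : T).
Hypothesis F : skew_frame M D1 D2 e.
Local Notation r := (rk M).

Lemma frame_memU t : t != e -> (t \in D1) || (t \in D2).
Proof. by rewrite -in_setC1 (frame_cover F) inE. Qed.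

Lemma frame_eD1 : e \notin D1.
Proof. by have := setC11 e; rewrite (frame_cover F) inE => /negbT/norP[]. Qed.

Lemma frame_eD2 : e \notin D2.
Proof. by have := setC11 e; rewrite (frame_cover F) inE => /negbT/norP[]. Qed.

Lemma frame_card_setT : #|T| = (#|D1| + #|D2|).+1.
Proof.
have := cardsC1 e; rewrite (frame_cover F) cardsU (disjoint_setI0 (frame_disjoint F)).
rewrite cards0 subn0 => ->.
by rewrite prednK //; apply/card_gt0P; exists e.
Qed.

Lemma frame_rk_setT : r setT = #|D1| + #|D2| - 2.
Proof.
rewrite -(frame_not_coloop F) (frame_cover F) -(frame_skew F).
rewrite (circuit_rk (frame_circuit1 F)) (circuit_rk (frame_circuit2 F)).
by have := frame_card1 F; have := frame_card2 F; lia.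
Qed.

Lemma frame_indepU (A B : {set T}) : A \proper D1 -> B \proper D2 -> indep r (A :|: B).
Proof.
move=> ltA ltB.
apply: (skew_indepU (frame_disjoint F) (frame_skew F) (proper_sub ltA) (proper_sub ltB)).
  exact: circuit_proper_indep (frame_circuit1 F) ltA.
exact: circuit_proper_indep (frame_circuit2 F) ltB.
Qed.

Lemma frame_circuit_avoiding_e (C : {set T}) :
  is_circuit M C -> e \notin C -> C = D1 \/ C = D2.
Proof.
move=> cC eC.
have [sD1C|nsD1C] := boolP (D1 \subset C).
  by left; rewrite (circuit_subset_eq (frame_circuit1 F) cC sD1C).
have [sD2C|nsD2C] := boolP (D2 \subset C).
  by right; rewrite (circuit_subset_eq (frame_circuit2 F) cC sD2C).
have CE : (C :&: D1) :|: (C :&: D2) = C.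
  rewrite -setIUr -(frame_cover F); apply/setIidPl/subsetP => t Ct.
  by rewrite in_setC1; apply: contraNneq eC => <-.
have lt_proper (D : {set T}) : ~~ (D \subset C) -> C :&: D \proper D.
  by move=> nsDC; rewrite properEneq subsetIr andbT; apply: contraNneq nsDC => <-; apply: subsetIl.
have /eqP := frame_indepU (lt_proper _ nsD1C) (lt_proper _ nsD2C).
by rewrite CE; have := rk_circuit_lt cC; lia.
Qed.

Lemma frame_e_not_spanned x z : x \in D1 -> z \in D1 -> x != z ->
  r (D1 :\: [set x; z] :|: D2) < r (e |: (D1 :\: [set x; z] :|: D2)).
Proof.
move=> Dx Dz xz; set W := _ :|: D2.
have sW : ~: [set x; z] \subset e |: W.
  apply/subsetP=> t; rewrite !inE => /norP[/negbTE-> /negbTE->] /=.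
  by have [//|te] := eqVneq t e; apply: frame_memU te.
have rW : r W = #|D1| - 2 + (#|D2| - 1).
  rewrite (skew_subset (frame_disjoint F) (frame_skew F) (subsetDl _ _) (subxx _)).
  rewrite (eqP (circuit_proper_indep (frame_circuit1 F) (properD2 z Dx))).
  by rewrite (circuit_rk (frame_circuit2 F)) cardsDS ?cards2 ?xz // subUset !sub1set Dx Dz.
(* r(E - {x, z}) = r(E) = r W + 1, yet E - {x, z} lies in e + W. *)
have := rk_mono M sW; rewrite (rank_drop_pairPn (frame_no_drop1 F) Dx Dz xz) frame_rk_setT rW.
by have := frame_card1 F; have := frame_card2 F; lia.
Qed.

Lemma frame_circuit_e_missing (C : {set T}) x z : is_circuit M C -> e \in C ->
  x \in D1 -> z \in D1 -> x \notin C -> z \notin C -> x = z.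
Proof.
move=> cC Ce Dx Dz xC zC; apply/eqP; apply: contraT => xz.
have := frame_e_not_spanned Dx Dz xz; rewrite (circuit_spans cC Ce) ?ltnn //.
apply/subsetP=> t; rewrite !inE => /andP[te Ct].
have /orP[D1t|->] := frame_memU te; last by rewrite orbT.
by rewrite D1t andbT; apply/orP; left; apply/norP; split; [apply: contraNneq xC | apply: contraNneq zC] => <-.
Qed.

Lemma frame_indep_setC2_e x y : x \in D1 -> y \in D2 -> indep r (~: [set x; y] :\ e).
Proof.
move=> Dx Dy; apply: indepS (frame_indepU (properD1 Dx) (properD1 Dy)).
apply/subsetP=> t; rewrite !inE => /andP[te /norP[tx ty]].
by rewrite tx ty; apply: frame_memU te.
Qed.

Lemma frame_indep_setC2_D1 x y t : x \in D1 -> y \in D2 -> t \in D1 -> t != x ->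
  indep r (~: [set x; y] :\ t).
Proof.
move=> Dx Dy Dt tx; set W := D1 :\: [set x; t] :|: D2 :\ y.
have /eqP iW : indep r W := frame_indepU (properD2 t Dx) (properD1 Dy).
have eW : e \notin W by rewrite !inE (negbTE frame_eD1) (negbTE frame_eD2) !andbF.
have rW : r W < r (e |: W).
  rewrite ltn_neqAle rk_mono ?subsetUr // andbT; apply/eqP => /esym.
  have sW : W \subset D1 :\: [set x; t] :|: D2 by rewrite setUS ?subD1set.
  have xt : x != t by rewrite eq_sym.
  by move/(spansS sW)=> rW0; have := frame_e_not_spanned Dx Dt xt; rewrite rW0 ltnn.
have ieW : indep r (e |: W).
  by apply/eqP; rewrite cardsU1 eW -iW; have := rk_setU1_le M e W; lia.
apply: indepS ieW; apply/subsetP=> u; rewrite !inE => /andP[ut /norP[ux uy]].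
have [//|ue] := eqVneq u e; rewrite (negbTE ux) (negbTE ut) (negbTE uy) /=.
exact: frame_memU ue.
Qed.

End Frame.

Section FrameCircuits.
Variables (T : finType) (M : matroid T) (D1 D2 : {set T}) (e : T).
Hypothesis F : skew_frame M D1 D2 e.
Let F' := skew_frame_sym F.

Lemma frame_circuit_through_e (C : {set T}) : is_circuit M C -> e \in C ->
  exists x y, [/\ x \in D1, y \in D2 & C = ~: [set x; y]].
Proof.
move=> cC Ce.
have missing D : is_circuit M D -> e \notin D -> exists2 x, x \in D & x \notin C.
  move=> cD eD; apply/subsetPn; apply: contra eD => sDC.
  by rewrite (circuit_subset_eq cD cC sDC).
have [x Dx xC] := missing _ (frame_circuit1 F) (frame_eD1 F).
have [y Dy yC] := missing _ (frame_circuit2 F) (frame_eD2 F).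
exists x, y; split=> //; apply/setP=> t; rewrite !inE.
have [Ct|tC] := boolP (t \in C).
  by apply/esym/norP; split; [apply: contraTneq Ct => -> | apply: contraTneq Ct => ->].
apply/esym/negbTE/norP => -[tx ty].
have te : t != e by apply: contraNneq tC => ->.
have /orP[D1t|D2t] := frame_memU F te.
  by move: tx; rewrite (frame_circuit_e_missing F cC Ce D1t Dx tC xC) eqxx.
by move: ty; rewrite (frame_circuit_e_missing F' cC Ce D2t Dy tC yC) eqxx.
Qed.

Lemma frame_setC2_circuit x y : x \in D1 -> y \in D2 -> is_circuit M (~: [set x; y]).
Proof.
move=> Dx Dy.
have xy : x != y by apply: contraTneq Dy => <-; rewrite (disjointFr (frame_disjoint F) Dx).
apply/andP; split.
  rewrite /indep cardsCs setCK cards2 xy (frame_card_setT F).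
  have := rk_mono M (subsetT (~: [set x; y])); rewrite (frame_rk_setT F).
  by have := frame_card1 F; have := frame_card2 F; lia.
apply/forallP => D; apply/implyP => /properP[sD [t Ct tD]].
apply: (@indepS _ _ _ (~: [set x; y] :\ t)); first by rewrite subsetD1 sD tD.
have [->|te] := eqVneq t e; first exact: (frame_indep_setC2_e F Dx Dy).
move: Ct; rewrite !inE => /norP[tx ty].
have /orP[D1t|D2t] := frame_memU F te; first exact: (frame_indep_setC2_D1 F Dx Dy D1t tx).
by rewrite setUC; apply: (frame_indep_setC2_D1 F' Dy Dx D2t ty).
Qed.

Lemma frame_circuitP (C : {set T}) : is_circuit M C <->
  [\/ C = D1, C = D2 | exists x y, [/\ x \in D1, y \in D2 & C = ~: [set x; y]]].
Proof.
split=> [cC | [->|->|[x [y [Dx Dy ->]]]]].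
- have [Ce|eC] := boolP (e \in C); first by apply: Or33; apply: frame_circuit_through_e.
  by case: (frame_circuit_avoiding_e F cC eC) => ->; [apply: Or31 | apply: Or32].
- exact: frame_circuit1 F.
- exact: frame_circuit2 F.
- exact: frame_setC2_circuit.
Qed.

End FrameCircuits.

Lemma urk_circuitP m (U : finType) (C : {set U}) : circuit (@urk m U) C <-> #|C| = m.+1.
Proof.
rewrite /circuit /indep /urk; split=> [/andP[depC /forallP minC] | cardC].
  have ltmC : m < #|C| by move: depC; apply: contraNT; rewrite -leqNgt => ?; apply/eqP; lia.
  have /card_gt0P[z Cz] : 0 < #|C| by lia.
  have := implyP (minC (C :\ z)) (properD1 Cz); rewrite (cardsD1 z C) Cz in ltmC *.
  by move/eqP; lia.
apply/andP; split; first by rewrite cardC; apply/eqP; lia.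
apply/forallP => D; apply/implyP => /proper_card; rewrite cardC => ltDC.
by apply/eqP; lia.
Qed.

Lemma option_setC1P (A : finType) (X : {set option A}) :
  #|X| = #|A| <-> exists u, X = [set~ u].
Proof.
split=> [cardX | [u ->]]; last by rewrite cardsC1 card_option.
have /cards1P[u Xu] : #|~: X| == 1 by have := cardsC X; rewrite card_option cardX; lia.
by exists u; rewrite -Xu setCK.
Qed.

Lemma mem_imset_embl (A B : finType) (X : {set option A}) (z : option (A + B)) :
  (z \in [set embl B x | x in X]) =
  match z with None => None \in X | Some (inl a) => Some a \in X | Some (inr _) => false end.
Proof.
apply/imsetP/idP => [[[a|] Xx ->] // | ].
by case: z => [[a|b]|] // Xz; [exists (Some a) | exists None].
Qed.

Lemma mem_imset_embr (A B : finType) (X : {set option B}) (z : option (A + B)) :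
  (z \in [set embr A x | x in X]) =
  match z with None => None \in X | Some (inr b) => Some b \in X | Some (inl _) => false end.
Proof.
apply/imsetP/idP => [[[b|] Xx ->] // | ].
by case: z => [[a|b]|] // Xz; [exists (Some b) | exists None].
Qed.

Lemma series_uniform_circuitP (A B : finType) m1 m2 (C : {set option (A + B)}) :
  m1.+1 = #|A| -> m2.+1 = #|B| ->
  series_circuit (circuit (@urk m1 (option A))) (circuit (@urk m2 (option B))) C <->
  [\/ C = [set embl B x | x in [set~ None]], C = [set embr A x | x in [set~ None]] |
      exists a b, C = [set embl B x | x in [set~ Some a]] :|: [set embr A x | x in [set~ Some b]]].
Proof.
move=> cardA cardB.
have circP (U : finType) m (X : {set option U}) :
    m.+1 = #|U| -> circuit (@urk m _) X <-> exists u, X = [set~ u].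
  by move=> cardU; rewrite urk_circuitP cardU option_setC1P.
split.
- case=> [[X [/(circP _ _ _ cardA)[u ->] Nu ->]] |
         [[X [/(circP _ _ _ cardB)[u ->] Nu ->]] |
          [X [Y [/(circP _ _ _ cardA)[u ->] /(circP _ _ _ cardB)[v ->] Nu Nv ->]]]]].
  + by case: u Nu => [a|_]; rewrite ?inE //; apply: Or31.
  + by case: u Nu => [b|_]; rewrite ?inE //; apply: Or32.
  + case: u v Nu Nv => [a|] [b|]; rewrite ?inE // => _ _.
    by apply: Or33; exists a, b.
- case=> [->|->|[a [b ->]]]; [left | right; left | right; right].
  + by exists [set~ None]; rewrite !inE; split=> //; apply/(circP _ _ _ cardA); exists None.
  + by exists [set~ None]; rewrite !inE; split=> //; apply/(circP _ _ _ cardB); exists None.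
  + exists [set~ Some a], [set~ Some b]; rewrite !inE; split=> //.
      by apply/(circP _ _ _ cardA); exists (Some a).
    by apply/(circP _ _ _ cardB); exists (Some b).
Qed.

Section FrameLabels.
Variables (T : finType) (M : matroid T) (D1 D2 : {set T}) (e : T).
Hypothesis F : skew_frame M D1 D2 e.
Variables (d1 d2 : T) (D1d1 : d1 \in D1) (D2d2 : d2 \in D2).

Definition frame_label (t : T) : option ('I_#|D1| + 'I_#|D2|) :=
  if t \in D1 then Some (inl (enum_rank_in D1d1 t))
  else if t \in D2 then Some (inr (enum_rank_in D2d2 t)) else None.

Definition frame_unlabel (o : option ('I_#|D1| + 'I_#|D2|)) : T :=
  match o with None => e | Some (inl i) => enum_val i | Some (inr j) => enum_val j end.

Lemma frame_labelK : cancel frame_label frame_unlabel.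
Proof.
move=> t; rewrite /frame_label; case: ifP => D1t; first by rewrite /= enum_rankK_in.
case: ifP => D2t; first by rewrite /= enum_rankK_in.
have [-> //|te] := eqVneq t e.
by have := frame_memU F te; rewrite D1t D2t.
Qed.

Lemma enum_val_D2_notin_D1 (j : 'I_#|D2|) : (enum_val j \in D1) = false.
Proof. by apply: disjointFr (enum_valP j); rewrite disjoint_sym (frame_disjoint F). Qed.

Lemma frame_unlabelK : cancel frame_unlabel frame_label.
Proof.
case=> [[i|j]|]; rewrite /frame_label /=.
- by rewrite enum_valP enum_valK_in.
- by rewrite enum_val_D2_notin_D1 enum_valP enum_valK_in.
- by rewrite (negbTE (frame_eD1 F)) (negbTE (frame_eD2 F)).
Qed.

Lemma frame_label_D1 : frame_label @: D1 = [set embl _ x | x in [set~ None]].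
Proof.
apply/setP => z; rewrite (can2_imset_pre _ frame_labelK frame_unlabelK) inE mem_imset_embl.
by case: z => [[i|j]|]; rewrite /= ?inE ?enum_valP ?enum_val_D2_notin_D1 ?(negbTE (frame_eD1 F)).
Qed.

Lemma frame_label_D2 : frame_label @: D2 = [set embr _ x | x in [set~ None]].
Proof.
apply/setP => z; rewrite (can2_imset_pre _ frame_labelK frame_unlabelK) inE mem_imset_embr.
case: z => [[i|j]|]; rewrite /= ?inE ?enum_valP ?(negbTE (frame_eD2 F)) //.
by rewrite (disjointFr (frame_disjoint F) (enum_valP i)).
Qed.

Lemma frame_label_setC2 (i : 'I_#|D1|) (j : 'I_#|D2|) :
  frame_label @: (~: [set enum_val i; enum_val j]) =
  [set embl _ x | x in [set~ Some i]] :|: [set embr _ x | x in [set~ Some j]].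
Proof.
apply/setP => z; rewrite (can2_imset_pre _ frame_labelK frame_unlabelK) !inE.
rewrite mem_imset_embl mem_imset_embr.
have ne12 (a : 'I_#|D1|) (b : 'I_#|D2|) : (enum_val a == enum_val b) = false.
  by apply: contraTF (enum_valP b) => /eqP <-; rewrite (disjointFr (frame_disjoint F) (enum_valP a)).
have neE (U : {set T}) (k : 'I_#|U|) : e \notin U -> (e == enum_val k) = false.
  by move=> eU; apply: contraNF eU => /eqP ->; apply: enum_valP.
case: z => [[a|b]|] /=; rewrite ?inE.
- by rewrite ne12 !orbF (inj_eq enum_val_inj) (inj_eq (@Some_inj _)).
- by rewrite [X in X || _]eq_sym ne12 /= (inj_eq enum_val_inj) (inj_eq (@Some_inj _)).
- by rewrite !neE ?(frame_eD1 F) ?(frame_eD2 F).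
Qed.

Lemma frame_label_iso : iso_series_uniform M #|D1|.+1 #|D2|.+1.
Proof.
exists frame_label; split; first exact: Bijective frame_labelK frame_unlabelK.
move=> C; have labelI := imset_inj (can_inj frame_labelK).
have card1 : (#|D1|.+1 - 2).+1 = #|'I_#|D1| | by rewrite card_ord; have := frame_card1 F; lia.
have card2 : (#|D2|.+1 - 2).+1 = #|'I_#|D2| | by rewrite card_ord; have := frame_card2 F; lia.
rewrite (frame_circuitP F) (series_uniform_circuitP _ card1 card2) -frame_label_D1 -frame_label_D2.
split=> [[->|->|[x [y [D1x D2y ->]]]] | [/labelI->|/labelI->|[i [j]]]].
- exact: Or31.
- exact: Or32.
- apply: Or33; exists (enum_rank_in D1d1 x), (enum_rank_in D2d2 y).
  by rewrite -frame_label_setC2 !enum_rankK_in.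
- exact: Or31.
- exact: Or32.
- rewrite -frame_label_setC2 => /labelI->.
  by apply: Or33; exists (enum_val i), (enum_val j); rewrite !enum_valP.
Qed.

End FrameLabels.

Lemma skew_frame_iso (T : finType) (M : matroid T) D1 D2 e :
  skew_frame M D1 D2 e -> iso_series_uniform M #|D1|.+1 #|D2|.+1.
Proof.
move=> F; have /card_gt0P[d1 D1d1] : 0 < #|D1| by have := frame_card1 F; lia.
have /card_gt0P[d2 D2d2] : 0 < #|D2| by have := frame_card2 F; lia.
exact: (frame_label_iso F D1d1 D2d2).
Qed.

Lemma skew_frame_of_connected (T : finType) (M : matroid T) (D1 D2 : {set T}) e :
  connected M -> e \notin D1 :|: D2 -> D1 :|: D2 :|: [set e] = [set: T] ->
  is_circuit M D1 -> is_circuit M D2 -> skew M D1 D2 ->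
  ~~ rank_drop_pair M D1 -> ~~ rank_drop_pair M D2 -> skew_frame M D1 D2 e.
Proof.
move=> conM eD E_D cD1 cD2 skD noD1 noD2.
have cover : [set~ e] = D1 :|: D2.
  apply/setP=> t; rewrite in_setC1; apply/idP/idP => [te | Dt].
    by have := in_setT t; rewrite -E_D in_setU in_set1 (negbTE te) orbF.
  by apply: contraNneq eD => <-.
have rk1 : {in D1 :|: D2, forall t, rk M [set t] = 1}.
  by move=> t; rewrite -cover in_setC1; apply: connected_rk1.
have rk1l : {in D1, forall t, rk M [set t] = 1} by move=> t Dt; rewrite rk1 // inE Dt.
have rk1r : {in D2, forall t, rk M [set t] = 1} by move=> t Dt; rewrite rk1 // inE Dt orbT.
have card1 := circuit_card_ge2 cD1 rk1l.
have /card_gt0P[d D1d] : 0 < #|D1| by lia.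
have [C [cC Cd Ce]] : exists C, [/\ is_circuit M C, d \in C & e \in C].
  by apply: conM; apply: contraNneq eD => <-; rewrite inE D1d.
split=> //; first exact: skew_disjoint rk1l skD.
  exact: circuit_card_ge2 cD2 rk1r.
exact: circuit_not_coloop cC Ce.
Qed.

Theorem lemma2p2 (T : finType) (M : matroid T) (D1 D2 : {set T}) (e : T) :
  connected M ->
  e \notin D1 :|: D2 ->
  D1 :|: D2 :|: [set e] = [set: T] ->
  is_circuit M D1 -> is_circuit M D2 -> skew M D1 D2 ->
  (exists C : {set T}, [/\ is_cocircuit M C, #|C| = 2 & e \notin C]) \/
  (exists k l : nat, [/\ 3 <= k, 3 <= l & iso_series_uniform M k l]).
Proof.
move=> conM eD E_D cD1 cD2 skD.
have drop_cocircuit D : is_circuit M D -> D \subset D1 :|: D2 -> rank_drop_pair M D ->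
    exists C : {set T}, [/\ is_cocircuit M C, #|C| = 2 & e \notin C].
  move=> cD sD /(rank_drop_pair_cocircuit cD)[C [coC C2 sCD]]; exists C; split=> //.
  by apply: contra eD; apply/subsetP; apply: subset_trans sD.
have [drop1|noD1] := boolP (rank_drop_pair M D1).
  by left; apply: drop_cocircuit cD1 (subsetUl _ _) drop1.
have [drop2|noD2] := boolP (rank_drop_pair M D2).
  by left; apply: drop_cocircuit cD2 (subsetUr _ _) drop2.
have F := skew_frame_of_connected conM eD E_D cD1 cD2 skD noD1 noD2.
right; exists #|D1|.+1, #|D2|.+1; split; last exact: skew_frame_iso F.
- by have := frame_card1 F.
- by have := frame_card2 F.
Qed.
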